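(* Let $S(\mathbf{G},\mathbf{\Sigma})$ be a constrained switching system with automaton $\mathbf{G}(V,E)$ and $\mathbf{\Sigma}=\{A_1,\dots,A_N\}\subset\mathbb{R}^{n\times n}$, and let $|\cdot|$ be a fixed vector norm on $\mathbb{R}^n$. Then $S$ admits an extremal multinorm, i.e. a multinorm $\mathcal{M}^*=\{|\cdot|_v : v\in V\}$ with $\gamma^*(\mathcal{M}^* )=\hat\rho(S)$, if and only if there exists a constant $K\ge 1$ such that for every path $p$ in $\mathbf{G}$ and every $x\in\mathbb{R}^n$, $$|A_p x|\le K\,\hat\rho(S)^{T_p}|x|,$$ where $T_p\ge 0$ is the length of $p$.
   Context: An automaton $\mathbf{G}(V,E)$ is a strongly connected directed graph with finite node set $V$ and finite edge set $E$ of labelled edges $(v,w,\sigma)$, $v,w\in V$, $\sigma\in\{1,\dots,N\}$. A path of length $T$ is a sequence of $T$ consecutive edges; if its labels are $\sigma(1),\dots,\sigma(T)$ then $A_p=A_{\sigma(T)}\cdots A_{\sigma(1)}$, and $A_p=I$ for $T=0$. A sequence of modes is accepted by $\mathbf{G}$ if it is the succession of labels along some path (no prescribed initial or final node). The CJSR of $S(\mathbf{G},\mathbf{\Sigma})$ is $$\hat\rho(S)=\lim_{t\to\infty}\max\{\|A_{\sigma(t-1)}\cdots A_{\sigma(0)}\|^{1/t} : \sigma(0),\dots,\sigma(t-1)\text{ accepted by }\mathbf{G}\}.$$ A multinorm for $S$ is a family $\{|\cdot|_v : v\in V\}$ of vector norms on $\mathbb{R}^n$, one per node, with value $\gamma^*(\mathcal{M})=\min\{\gamma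 : |A_\sigma x|_w\le\gamma|x|_v\ \forall x\in\mathbb{R}^n,\ \forall (v,w,\sigma)\in E\}$. *)

From HB Require Import structures.
From mathcomp Require Import all_boot all_order all_algebra.
From mathcomp Require Import all_classical all_reals all_analysis.
Set Implicit Arguments. Unset Strict Implicit. Unset Printing Implicit Defensive.
Import Order.TTheory GRing.Theory Num.Theory.
Import numFieldNormedType.Exports.
Local Open Scope ring_scope.

Section CSS.
Variables (R : realType) (n N : nat) (V : finType).

(* A labelled edge (v, w, sigma): e.1.1 = v (source), e.1.2 = w (target),
   e.2 = sigma (mode label; modes 1..N are indexed by 'I_N). *)
Definition edge := (V * V * 'I_N)%type.

Fixpoint consecutive (p : seq edge) : bool :=
  match p with
  | e1 :: ((e2 :: _) as q) => (e1.1.2 == e2.1.1) && consecutive q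
  | _ => true
  end.

Definition is_path (E : {set edge}) (p : seq edge) : bool :=
  all (fun e => e \in E) p && consecutive p.

Definition strongly_connected (E : {set edge}) : Prop :=
  forall v w : V, v = w \/
    exists (e : edge) (p : seq edge),
      is_path E (e :: p) /\ e.1.1 = v /\ (last e p).1.2 = w.

(* product A_{s_(T-1)} ... A_{s_0} for a label sequence s_0, ..., s_(T-1);
   the empty product is the identity *)
Definition prodA (A : 'I_N -> 'M[R]_n) (s : seq 'I_N) : 'M[R]_n :=
  foldl (fun M k => A k *m M) 1%:M s.

Definition Apath (A : 'I_N -> 'M[R]_n) (p : seq edge) : 'M[R]_n :=
  prodA A (map (fun e => e.2) p).

Definition accepted (E : {set edge}) t (s : t.-tuple 'I_N) : bool :=
  [exists p : t.-tuple edge, is_path E p && (map (fun e => e.2) p == s)].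

(* CJSR: lim_t max { ||A_{s(t-1)} ... A_{s(0)}||^(1/t) : s accepted },
   ||.|| being the library norm on matrices (max of absolute entries);
   the max over an empty family is 0. *)
Definition cjsr (E : {set edge}) (A : 'I_N -> 'M[R]_n) : R :=
  limn (fun t : nat =>
    \big[Num.max/0]_(s : t.-tuple 'I_N | accepted E s)
       (`|prodA A s| `^ (t%:R)^-1)).

Definition is_vnorm (nu : 'cV[R]_n -> R) : Prop :=
  (forall x, 0 <= nu x) /\ (forall x, nu x = 0 -> x = 0) /\
  (forall (a : R) x, nu (a *: x) = `|a| * nu x) /\
  (forall x y, nu (x + y) <= nu x + nu y).

Definition is_multinorm (M : V -> 'cV[R]_n -> R) : Prop :=
  forall v, is_vnorm (M v).

Definition gamma_ok (E : {set edge}) (A : 'I_N -> 'M[R]_n)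
  (M : V -> 'cV[R]_n -> R) (g : R) : Prop :=
  forall e, e \in E -> forall x, M e.1.2 (A e.2 *m x) <= g * M e.1.1 x.

Definition is_gamma_star (E : {set edge}) (A : 'I_N -> 'M[R]_n)
  (M : V -> 'cV[R]_n -> R) (g : R) : Prop :=
  0 <= g /\ gamma_ok E A M g /\
  (forall g', 0 <= g' -> gamma_ok E A M g' -> g <= g').

Definition extremal_multinorm (E : {set edge}) (A : 'I_N -> 'M[R]_n)
  (M : V -> 'cV[R]_n -> R) : Prop :=
  is_multinorm M /\ is_gamma_star E A M (cjsr E A).

End CSS.

From HB Require Import structures.
From mathcomp Require Import all_boot all_order all_algebra.
From mathcomp Require Import all_classical all_reals all_analysis.
From mathcomp Require Import lra.
Import Order.TTheory GRing.Theory Num.Theory.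
Import numFieldNormedType.Exports.
Set Implicit Arguments.
Unset Strict Implicit.
Unset Printing Implicit Defensive.
Local Open Scope ring_scope.
Local Open Scope classical_set_scope.

(* All norms on R^n are equivalent, with constants uniform over the finitely
   many nodes.  If M is extremal, induction along a path p from v to w gives
   |A_p x|_w <= rho^T |x|_v, and norm equivalence turns this into the bound
   with a uniform K.  Conversely, given the bound and rho > 0, the node norms
     |x|_v = sup { |A_p x| / rho^(T_p) : p a path starting at v }
   lie between |x| and K |x|, and prepending an edge (v, w, s) to a path
   from w shows |A_s x|_w <= rho |x|_v.  No multinorm does better than rho:
   a gamma-bound on the edges bounds every ||A_p|| by a constant times
   gamma^(T_p), whose T_p-th roots tend to gamma. *)

Section MatrixNorm.
Variable R : realType.

Lemma mx_norm_entry_le m p (M : 'M[R]_(m, p)) i j : `|M i j| <= `|M|.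
Proof.
rewrite [`|M|]mx_normrE.
exact: (le_bigmax _ (fun ij : 'I_m * 'I_p => `|M ij.1 ij.2|) (i, j)).
Qed.

Lemma mx_norm_le m p (M : 'M[R]_(m, p)) b :
  0 <= b -> (forall i j, `|M i j| <= b) -> `|M| <= b.
Proof. by move=> b0 Mb; rewrite [`|M|]mx_normrE; apply: bigmax_le => // -[i j]. Qed.

Lemma mx_norm_trmx m p (M : 'M[R]_(m, p)) : `|M^T| = `|M|.
Proof.
apply/eqP; rewrite eq_le; apply/andP; split; apply: mx_norm_le => // i j.
  by rewrite mxE mx_norm_entry_le.
by have := mx_norm_entry_le M^T j i; rewrite mxE.
Qed.

End MatrixNorm.

Lemma continuous_of_dist_le (R : realType) (W : normedModType R) (f : W -> R) B :
  0 <= B -> (forall y z, `|f y - f z| <= B * `|y - z|) -> continuous f.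
Proof.
move=> B0 fB y; apply/cvgrPdist_lt => e e0.
have eB : 0 < e / (B + 1) by rewrite divr_gt0 // ltr_wpDl.
near=> z; apply: le_lt_trans (fB y z) _.
have : `|y - z| < e / (B + 1) by near: z; exact: cvgr_dist_lt.
rewrite ltr_pdivlMr ?ltr_wpDl // => yz.
have := normr_ge0 (y - z); nra.
Unshelve. all: by end_near.
Qed.

Section VectorNorm.
Variables (R : realType) (n : nat) (nu : 'cV[R]_n -> R).
Hypothesis nu_vnorm : is_vnorm nu.

Lemma vnorm_ge0 x : 0 <= nu x.
Proof. by case: nu_vnorm => + _; apply. Qed.

Lemma vnorm_eq0 x : nu x = 0 -> x = 0.
Proof. by case: nu_vnorm => _ [+ _]; apply. Qed.

Lemma vnormZ a x : nu (a *: x) = `|a| * nu x.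
Proof. by case: nu_vnorm => _ [_ [+ _]]; apply. Qed.

Lemma vnormD x y : nu (x + y) <= nu x + nu y.
Proof. by case: nu_vnorm => _ [_ [_]]; apply. Qed.

Lemma vnorm0 : nu 0 = 0.
Proof. by rewrite -(scale0r 0) vnormZ normr0 mul0r. Qed.

Lemma vnormN x : nu (- x) = nu x.
Proof. by rewrite -scaleN1r vnormZ normrN normr1 mul1r. Qed.

Lemma vnorm_sum (I : finType) (F : I -> 'cV[R]_n) :
  nu (\sum_i F i) <= \sum_i nu (F i).
Proof.
elim/big_rec2: _ => [|i s y _ IH]; first by rewrite vnorm0.
by apply: le_trans (vnormD _ _) _; rewrite lerD2l.
Qed.

Lemma vnorm_le_mx_norm : exists2 B, 0 <= B & forall x, nu x <= B * `|x|.
Proof.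
exists (\sum_i nu (delta_mx i 0)) => [|x].
  by apply: sumr_ge0 => i _; apply: vnorm_ge0.
have xE : x = \sum_i x i 0 *: delta_mx i 0.
  by rewrite {1}(matrix_sum_delta x); apply: eq_bigr => i _; rewrite big_ord1.
rewrite {1}xE mulr_suml; apply: le_trans (vnorm_sum _) _; apply: ler_sum => i _.
rewrite vnormZ mulrC ler_wpM2l ?vnorm_ge0 //.
exact: mx_norm_entry_le.
Qed.

Lemma vnorm_dist_le B : (forall x, nu x <= B * `|x|) ->
  forall x y, `|nu x - nu y| <= B * `|x - y|.
Proof.
move=> nuB x y; apply: le_trans (nuB (x - y)).
have := vnormD (x - y) y; have := vnormD (y - x) x.
rewrite !subrK -opprB vnormN ler_norml; lra.
Qed.

Lemma mx_norm_le_vnorm : exists2 c, 0 < c & forall x, c * `|x| <= nu x.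
Proof.
have [B B0 nuB] := vnorm_le_mx_norm.
(* compactness of bounded closed sets is available for row vectors only *)
pose f (y : 'rV[R]_n) := nu y^T.
pose S := [set y : 'rV[R]_n | `|y| = 1].
have normalized_in_S x : x != 0 -> S (`|x|^-1 *: x^T).
  move=> x0; rewrite /S /= normrZ mx_norm_trmx ger0_norm ?invr_ge0 //.
  by rewrite mulVf // normr_eq0.
have f_normalized x : f (`|x|^-1 *: x^T) = `|x|^-1 * nu x.
  by rewrite /f linearZ /= trmxK vnormZ ger0_norm // invr_ge0.
have [S0|S0] := pselect (S !=set0); last first.
  exists 1 => // x; have [->|x0] := eqVneq x 0; first by rewrite normr0 mulr0 vnorm0.
  by exfalso; apply: S0; exists (`|x|^-1 *: x^T); exact: normalized_in_S.
have S_compact : compact S.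
  apply: bounded_closed_compact.
    by exists 1; split => // M M1 y /= ->; exact: ltW.
  exact: (continuous_closedP (fun y : 'rV[R]_n => `|y|)).1
    (@norm_continuous _ _) _ (@closed_eq R 1).
have f_cont : continuous f.
  apply: (continuous_of_dist_le B0) => y z.
  by rewrite /f -mx_norm_trmx linearB vnorm_dist_le.
have [y0 /set_mem y0S y0_min] :=
  compact_EVT_min S0 S_compact (continuous_subspaceT f_cont).
have f_y0_gt0 : 0 < f y0.
  rewrite lt_def vnorm_ge0 andbT; apply/negP => /eqP /vnorm_eq0 y0T0.
  by move: y0S; rewrite /S /= -mx_norm_trmx y0T0 normr0 => /esym/eqP; rewrite oner_eq0.
exists (f y0) => // x; have [->|x0] := eqVneq x 0; first by rewrite normr0 mulr0 vnorm0.
have := y0_min _ (mem_set (normalized_in_S x x0)); rewrite f_normalized.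
by rewrite ler_pdivlMl ?normr_gt0 // mulrC.
Qed.

Lemma vnorm_equiv_mx_norm :
  exists2 C, 1 <= C & forall x, `|x| <= C * nu x /\ nu x <= C * `|x|.
Proof.
have [B B0 nuB] := vnorm_le_mx_norm; have [c c0 cnu] := mx_norm_le_vnorm.
have ic0 : 0 <= c^-1 by rewrite invr_ge0 ltW.
exists (1 + B + c^-1) => [|x]; first lra.
have := normr_ge0 x; have := vnorm_ge0 x; split.
  by apply: le_trans (_ : c^-1 * nu x <= _); rewrite ?ler_pdivlMl // ler_wpM2r //; lra.
by apply: le_trans (nuB x) _; rewrite ler_wpM2r //; lra.
Qed.

End VectorNorm.

Section NormEquivalence.
Variables (R : realType) (n : nat).

Lemma vnorm_equiv (nu mu : 'cV[R]_n -> R) : is_vnorm nu -> is_vnorm mu ->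
  exists2 C, 1 <= C & forall x, nu x <= C * mu x /\ mu x <= C * nu x.
Proof.
move=> nuN muN.
have [C1 C1_ge1 nuC1] := vnorm_equiv_mx_norm nuN.
have [C2 C2_ge1 muC2] := vnorm_equiv_mx_norm muN.
have C_ge1 : 1 <= C1 * C2 by rewrite -[1]mulr1 ler_pM.
exists (C1 * C2) => // x; have [x_nu nu_x] := nuC1 x; have [x_mu mu_x] := muC2 x.
have C10 : 0 <= C1 by lra.
have C20 : 0 <= C2 by lra.
split; rewrite -mulrA.
  by apply: le_trans nu_x _; rewrite ler_wpM2l.
by rewrite mulrCA; apply: le_trans mu_x _; rewrite ler_wpM2l.
Qed.

Lemma multinorm_equiv (V : finType) (nu : 'cV[R]_n -> R) (M : V -> 'cV[R]_n -> R) :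
  is_vnorm nu -> is_multinorm M ->
  exists2 C, 1 <= C & forall v x, nu x <= C * M v x /\ M v x <= C * nu x.
Proof.
move=> nuN MN.
have /choice [C HC] : forall v, exists C : R,
    1 <= C /\ forall x, nu x <= C * M v x /\ M v x <= C * nu x.
  by move=> v; have [C C1 HC] := vnorm_equiv nuN (MN v); exists C.
pose Cmax := \big[Num.max/1]_v C v.
have Cmax_ge1 : 1 <= Cmax by exact: bigmax_ge_id.
exists Cmax => // v x; have [Cv1 /(_ x) [nu_M M_nu]] := HC v.
have Cv_le : C v <= Cmax by exact: le_bigmax.
have := vnorm_ge0 nuN x; have := vnorm_ge0 (MN v) x; split; nra.
Qed.

Lemma mx_norm_le_vnorm_gain (nu : 'cV[R]_n -> R) : is_vnorm nu ->
  exists2 C, 0 <= C & forall (P : 'M[R]_n) b, 0 <= b ->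
    (forall x, nu (P *m x) <= b * nu x) -> `|P| <= C * b.
Proof.
move=> nuN; have [C C1 nuC] := vnorm_equiv_mx_norm nuN.
have C0 : 0 <= C by lra.
exists (C * C) => [|P b b0 Pb]; first exact: mulr_ge0.
apply: mx_norm_le => [|i j]; first by rewrite !mulr_ge0.
have delta_le1 : `|delta_mx j 0 : 'cV[R]_n| <= 1.
  by apply: mx_norm_le => // k l; rewrite mxE; case: (_ && _); rewrite ?normr1 ?normr0.
have -> : P i j = (P *m (delta_mx j 0 : 'cV_n)) i 0 by rewrite -colE mxE.
apply: le_trans (mx_norm_entry_le _ i 0) _; apply: le_trans (nuC _).1 _.
rewrite -mulrA ler_wpM2l //; apply: le_trans (Pb _) _.
rewrite mulrC ler_wpM2r //; apply: le_trans (nuC _).2 _.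
by rewrite -[leRHS]mulr1 ler_wpM2l.
Qed.

End NormEquivalence.

Lemma limn_le_of_pow_bound (R : realType) (u : R^nat) (g D : R) : 0 <= g ->
  (forall t, (0 < t)%N -> forall q, 0 < q -> q < u t -> q ^+ t <= D * g ^+ t) ->
  limn u <= g.
Proof.
move=> g0 uB; rewrite leNgt; apply/negP => gL.
have u_cvg : cvgn u.
  by apply: contrapT => /dvgP u_dvg; move: gL; rewrite u_dvg ltNge g0.
pose q : R := (g + limn u) / 2; have q0 : 0 < q by rewrite /q; lra.
have gq_lt1 : `|g / q| < 1.
  rewrite ger0_norm ?ltr_pdivrMr ?mul1r ?divr_ge0 ?(ltW q0) // /q; lra.
have eps0 : 0 < (`|D| + 1)^-1 by rewrite invr_gt0 ltr_wpDl.
near \oo => t.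
have qu : q < u t by near: t; apply: cvgr_gt u_cvg _ _; rewrite /q; lra.
have small : `|(g / q) ^+ t| < (`|D| + 1)^-1.
  by near: t; apply: cvgr0_norm_lt eps0; exact: cvg_expr.
have t0 : (0 < t)%N by near: t; exists 1%N.
have gE : g ^+ t = (g / q) ^+ t * q ^+ t by rewrite -exprMn mulfVK // gt_eqF.
have Dr_lt1 : D * (g / q) ^+ t < 1.
  apply: le_lt_trans (ler_norm _) _; rewrite normrM.
  move: small; rewrite -[X in _ < X]mul1r ltr_pdivlMr ?ltr_wpDl //.
  have := normr_ge0 D; have := normr_ge0 ((g / q) ^+ t); nra.
have := uB t t0 q q0 qu; rewrite gE mulrA; apply/negP; rewrite -ltNge.
by rewrite gtr_pMl // exprn_gt0.
Unshelve. all: by end_near.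
Qed.

Section Paths.
Variables (R : realType) (n N : nat) (V : finType).
Variables (E : {set edge N V}) (A : 'I_N -> 'M[R]_n).
Implicit Types (e : edge N V) (p : seq (edge N V)).

Lemma prodA_cons k s : prodA A (k :: s) = prodA A s *m A k.
Proof.
rewrite /prodA /= mulmx1 -[A k in LHS]mul1mx.
elim: s (1%:M : 'M[R]_n) => [|l s IH] P //=.
by rewrite mulmxA IH.
Qed.

Lemma Apath_nil : Apath A ([::] : seq (edge N V)) = 1%:M.
Proof. by []. Qed.

Lemma Apath_cons e p : Apath A (e :: p) = Apath A p *m A e.2.
Proof. exact: prodA_cons. Qed.

Lemma is_path1 e : is_path E [:: e] = (e \in E).
Proof. by rewrite /is_path /= !andbT. Qed.

Lemma is_path_cons2 e e' p :
  is_path E [:: e, e' & p] = [&& e \in E, e.1.2 == e'.1.1 & is_path E (e' :: p)].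
Proof. by rewrite /is_path /=; case: (e \in E); case: (_ == _); rewrite ?andbF. Qed.

Definition starts_at (v : V) (p : seq (edge N V)) : bool :=
  if p is e :: _ then e.1.1 == v else true.

Lemma is_path_cons e p :
  e \in E -> starts_at e.1.2 p -> is_path E p -> is_path E (e :: p).
Proof.
by case: p => [|e' p] eE //=; rewrite ?is_path1 // is_path_cons2 eE eq_sym => ->.
Qed.

Section GammaOk.
Variables (M : V -> 'cV[R]_n -> R) (g : R).
Hypotheses (g0 : 0 <= g) (Mg : gamma_ok E A M g).

Lemma gamma_ok_path e p x : is_path E (e :: p) ->
  M (last e p).1.2 (Apath A (e :: p) *m x) <= g ^+ (size p).+1 * M e.1.1 x.
Proof.
elim: p e x => [|e' p IH] e x.
  by rewrite is_path1 Apath_cons Apath_nil mul1mx expr1 => /Mg.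
rewrite is_path_cons2 Apath_cons -mulmxA => /and3P[eE /eqP ee' pP] /=.
apply: le_trans (IH _ _ pP) _; rewrite -ee' [in leRHS]exprSr -mulrA.
by rewrite ler_wpM2l ?exprn_ge0 // Mg.
Qed.

Lemma gamma_ok_path_vnorm (nu : 'cV[R]_n -> R) C : is_vnorm nu -> 1 <= C ->
  (forall v x, nu x <= C * M v x /\ M v x <= C * nu x) ->
  forall p, is_path E p -> forall x, nu (Apath A p *m x) <= C ^+ 2 * g ^+ size p * nu x.
Proof.
move=> nuN C1 nuM [|e p] pP x.
  by rewrite Apath_nil mul1mx mulr1 ler_peMl ?vnorm_ge0 // expr_ge1 // (le_trans ler01).
have C0 : 0 <= C by exact: le_trans ler01 C1.
apply: le_trans (nuM (last e p).1.2 _).1 _.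
rewrite expr2 -!mulrA ler_wpM2l //; apply: le_trans (gamma_ok_path x pP) _.
by rewrite mulrCA ler_wpM2l ?exprn_ge0 // (nuM _ _).2.
Qed.

End GammaOk.

Lemma cjsr_ge0 : 0 <= cjsr E A.
Proof.
rewrite /cjsr; set u := fun t => _.
have [u_cvg|u_dvg] := pselect (cvgn u); last by rewrite dvgP.
apply: limr_ge u_cvg _; apply: nearW => t.
by rewrite /u; elim/big_ind: _ => // a b a0 b0; rewrite le_max a0.
Qed.

Lemma cjsr_le_of_accepted_bound g D : 0 <= g ->
  (forall t (s : t.-tuple 'I_N), accepted E s -> `|prodA A s| <= D * g ^+ t) ->
  cjsr E A <= g.
Proof.
move=> g0 sB; apply: (limn_le_of_pow_bound g0) => t t0 q q0 q_lt.
have [s sA qs] : exists2 s : t.-tuple 'I_N,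
    accepted E s & q < `|prodA A s| `^ (t%:R)^-1.
  apply: contrapT => no_s; move: q_lt; apply/negP; rewrite -leNgt.
  apply: bigmax_le (ltW q0) _ => s sA; rewrite leNgt; apply/negP => qs.
  by apply: no_s; exists s.
have t_neq0 : (t%:R : R) != 0 by rewrite pnatr_eq0 -lt0n.
have : q ^+ t < (`|prodA A s| `^ (t%:R)^-1) ^+ t.
  by rewrite ltrXn2r -?lt0n // ?ltW // powR_ge0.
rewrite -powR_mulrn ?powR_ge0 // -powRrM mulVf // powRr1 //.
by move/ltW/le_trans; apply; exact: sB.
Qed.

Lemma cjsr_le_of_path_bound (nu : 'cV[R]_n -> R) g K :
  is_vnorm nu -> 0 <= g -> 0 <= K ->
  (forall p, is_path E p -> forall x, nu (Apath A p *m x) <= K * g ^+ size p * nu x) ->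
  cjsr E A <= g.
Proof.
move=> nuN g0 K0 pB; have [C C0 CP] := mx_norm_le_vnorm_gain nuN.
apply: (@cjsr_le_of_accepted_bound _ (C * K) g0) => t s /existsP[p /andP[pP /eqP ps]].
rewrite /Apath -ps -mulrA; apply: CP; first by rewrite mulr_ge0 ?exprn_ge0.
by move=> x; have := pB _ pP x; rewrite size_tuple.
Qed.

Lemma cjsr_le_gamma_ok (nu : 'cV[R]_n -> R) (M : V -> 'cV[R]_n -> R) g :
  is_vnorm nu -> is_multinorm M -> 0 <= g -> gamma_ok E A M g -> cjsr E A <= g.
Proof.
move=> nuN MN g0 Mg; have [C C1 nuM] := multinorm_equiv nuN MN.
apply: (cjsr_le_of_path_bound nuN g0 _ (gamma_ok_path_vnorm g0 Mg nuN C1 nuM)).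
by rewrite exprn_ge0 // (le_trans ler01).
Qed.

End Paths.

Section ExtremalNorm.
Variables (R : realType) (n N : nat) (V : finType).
Variables (E : {set edge N V}) (A : 'I_N -> 'M[R]_n) (nrm : 'cV[R]_n -> R) (K : R).
Hypotheses (nrmN : is_vnorm nrm) (rho_gt0 : 0 < cjsr E A).
Hypothesis path_bound : forall p, is_path E p ->
  forall x, nrm (Apath A p *m x) <= K * cjsr E A ^+ size p * nrm x.
Local Notation rho := (cjsr E A).

Definition normalized_orbit (v : V) (x : 'cV[R]_n) : set R :=
  [set nrm (Apath A p *m x) / rho ^+ size p
     | p in [set p | is_path E p && starts_at v p]].

Definition extremal_norm (v : V) (x : 'cV[R]_n) : R := sup (normalized_orbit v x).

Lemma normalized_orbit_le v x r : normalized_orbit v x r -> r <= K * nrm x.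
Proof.
by move=> [p /andP[pP _] <-]; rewrite ler_pdivrMr ?exprn_gt0 // mulrAC path_bound.
Qed.

Lemma normalized_orbit_has_sup v x : has_sup (normalized_orbit v x).
Proof.
split; last by exists (K * nrm x) => r /normalized_orbit_le.
by exists (nrm x), [::]; rewrite // Apath_nil mul1mx expr0 divr1.
Qed.

Lemma extremal_norm_ge p v x : is_path E p -> starts_at v p ->
  nrm (Apath A p *m x) / rho ^+ size p <= extremal_norm v x.
Proof.
move=> pP pv; apply: sup_upper_bound (normalized_orbit_has_sup v x) _ _.
by exists p => //=; rewrite pP.
Qed.

Lemma extremal_norm_le v x b : (forall p, is_path E p -> starts_at v p ->
  nrm (Apath A p *m x) / rho ^+ size p <= b) -> extremal_norm v x <= b.
Proof.
move=> pb; apply: ge_sup (normalized_orbit_has_sup v x).1 _.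
by move=> _ [p /andP[pP pv] <-]; exact: pb.
Qed.

Lemma nrm_le_extremal_norm v x : nrm x <= extremal_norm v x.
Proof.
by have := @extremal_norm_ge [::] v x; rewrite Apath_nil mul1mx expr0 divr1; apply.
Qed.

Lemma extremal_normZ v a x : extremal_norm v (a *: x) = `|a| * extremal_norm v x.
Proof.
apply/eqP; rewrite eq_le; apply/andP; split.
  apply: extremal_norm_le => p pP pv.
  by rewrite -scalemxAr vnormZ // -mulrA ler_wpM2l // extremal_norm_ge.
have [->|a0] := eqVneq a 0.
  by rewrite normr0 mul0r (le_trans (vnorm_ge0 nrmN _) (nrm_le_extremal_norm _ _)).
rewrite -ler_pdivlMl ?normr_gt0 //; apply: extremal_norm_le => p pP pv.
by rewrite ler_pdivlMl ?normr_gt0 // mulrA -vnormZ // scalemxAr extremal_norm_ge.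
Qed.

Lemma extremal_normD v x y :
  extremal_norm v (x + y) <= extremal_norm v x + extremal_norm v y.
Proof.
apply: extremal_norm_le => p pP pv; rewrite mulmxDr.
apply: le_trans
  (_ : (nrm (Apath A p *m x) + nrm (Apath A p *m y)) / rho ^+ size p <= _).
  by rewrite ler_wpM2r ?invr_ge0 ?exprn_ge0 ?(ltW rho_gt0) //; exact: vnormD.
by rewrite mulrDl lerD // extremal_norm_ge.
Qed.

Lemma extremal_norm_vnorm v : is_vnorm (extremal_norm v).
Proof.
have ge0 x : 0 <= extremal_norm v x :=
  le_trans (vnorm_ge0 nrmN x) (nrm_le_extremal_norm v x).
split=> [//|]; split=> [x x0|].
  apply: (vnorm_eq0 nrmN); apply/eqP.
  by rewrite eq_le vnorm_ge0 // -x0 nrm_le_extremal_norm.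
by split; [exact: extremal_normZ | exact: extremal_normD].
Qed.

Lemma extremal_norm_gamma_ok : gamma_ok E A extremal_norm rho.
Proof.
move=> e eE x; apply: extremal_norm_le => p pP pv.
have := extremal_norm_ge x (is_path_cons eE pv pP) (eqxx e.1.1).
rewrite Apath_cons -mulmxA exprS invfM mulrCA => /(ler_wpM2l (ltW rho_gt0)).
by rewrite mulVKf ?gt_eqF.
Qed.

End ExtremalNorm.

Section Characterization.
Variables (R : realType) (n N : nat) (V : finType).
Variables (E : {set edge N V}) (A : 'I_N -> 'M[R]_n) (nrm : 'cV[R]_n -> R).
Hypothesis nrmN : is_vnorm nrm.

Definition cjsr_path_bounded (K : R) : Prop :=
  forall p, is_path E p ->
    forall x, nrm (Apath A p *m x) <= K * cjsr E A ^+ size p * nrm x.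

Lemma extremal_multinorm_path_bounded M :
  extremal_multinorm E A M -> exists2 K, 1 <= K & cjsr_path_bounded K.
Proof.
move=> [MN [rho0 [Mrho _]]]; have [C C1 nrmM] := multinorm_equiv nrmN MN.
exists (C ^+ 2) => [|p]; first exact: exprn_ege1.
exact: (gamma_ok_path_vnorm rho0 Mrho nrmN C1 nrmM).
Qed.

Lemma path_bounded_extremal_multinorm K :
  cjsr_path_bounded K -> exists M, extremal_multinorm E A M.
Proof.
move=> pK; have [rho0|rho_neq0] := eqVneq (cjsr E A) 0.
  (* the bound on one-edge paths forces A_s x = 0 along every edge *)
  exists (fun=> nrm); split=> [v //|]; rewrite rho0; split=> //; split=> // e eE x.
  have := pK [:: e]; rewrite is_path1 rho0 expr1 mulr0 Apath_cons Apath_nil mul1mx.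
  by move=> /(_ eE x); rewrite mul0r.
have rho_gt0 : 0 < cjsr E A by rewrite lt_def rho_neq0 cjsr_ge0.
have MN := extremal_norm_vnorm nrmN rho_gt0 pK.
exists (extremal_norm E A nrm); split=> //; split; first exact: cjsr_ge0.
split; first exact: extremal_norm_gamma_ok rho_gt0 pK.
by move=> g g0; apply: cjsr_le_gamma_ok nrmN MN g0.
Qed.

End Characterization.

Theorem theorem2p7 (R : realType) (n N : nat) (V : finType)
  (E : {set edge N V}) (A : 'I_N -> 'M[R]_n) (nrm : 'cV[R]_n -> R) :
  strongly_connected E -> is_vnorm nrm ->
  ((exists M : V -> 'cV[R]_n -> R, extremal_multinorm E A M) <->
   (exists K : R, 1 <= K /\
      forall p : seq (edge N V), is_path E p ->
        forall x : 'cV[R]_n,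
          nrm (Apath A p *m x) <= K * cjsr E A ^+ size p * nrm x)).
Proof.
move=> _ nrmN; split=> [[M /(extremal_multinorm_path_bounded nrmN)] | [K [_ pK]]].
  by move=> [K K1 pK]; exists K.
exact: path_bounded_extremal_multinorm pK.
Qed.
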